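(* Let $a\ge b\ge 2$ be integers and $A=\begin{pmatrix}0&a&-2\\-a&0&b\\2&-b&0\end{pmatrix}$. Then $A$ is mutation-cyclic if and only if $a=b$.
   Context: Matrix mutation: $\mu_k(B)=(b'_{ij})$ with $b'_{ij}=-b_{ij}$ if $i=k$ or $j=k$, $b'_{ij}=b_{ij}+\operatorname{sgn}(b_{ik})\max(b_{ik}b_{kj},0)$ otherwise. A $3\times3$ skew-symmetric matrix is cyclic if its quiver ($b_{ij}$ arrows $i\to j$ when $b_{ij}>0$) contains an oriented cycle; it is mutation-cyclic if every matrix obtained from it by a finite sequence of mutations is cyclic. *)

From mathcomp Require Import all_boot all_order all_algebra.
Set Implicit Arguments. Unset Strict Implicit. Unset Printing Implicit Defensive.
Import Order.TTheory GRing.Theory Num.Theory.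
Local Open Scope ring_scope.

Definition mutate (n : nat) (k : 'I_n) (B : 'M[int]_n) : 'M[int]_n :=
  \matrix_(i < n, j < n)
    if (i == k) || (j == k) then - B i j
    else B i j + sgz (B i k) * Num.max (B i k * B k j) 0.

Definition mutate_seq (n : nat) (ks : seq 'I_n) (B : 'M[int]_n) : 'M[int]_n :=
  foldl (fun M k => mutate k M) B ks.

Definition skew_symmetric (n : nat) (B : 'M[int]_n) : Prop :=
  forall i j, B i j = - B j i.

(* Quiver of B: b_ij arrows i -> j when b_ij > 0.  B is cyclic if the quiver
   contains an oriented cycle, i.e. a nonempty closed walk along arrows. *)
Definition quiver_arrow (n : nat) (B : 'M[int]_n) : rel 'I_n :=
  fun i j => 0 < B i j.

Definition is_cyclic (n : nat) (B : 'M[int]_n) : Prop :=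
  exists s : seq 'I_n, s != [::] /\ cycle (quiver_arrow B) s.

Definition mutation_cyclic (n : nat) (B : 'M[int]_n) : Prop :=
  forall ks : seq 'I_n, is_cyclic (mutate_seq ks B).

Definition Amat (a b : int) : 'M[int]_3 :=
  \matrix_(i < 3, j < 3)
    nth 0 (nth [::] [:: [:: 0; a; -2]; [:: -a; 0; b]; [:: 2; -b; 0]] i) j.

From mathcomp Require Import all_boot all_order all_algebra zify.
Set Implicit Arguments. Unset Strict Implicit. Unset Printing Implicit Defensive.
Import Order.TTheory GRing.Theory Num.Theory.
Local Open Scope ring_scope.

(* For [a = b], the matrix is the cyclic triangle with weights (a, a, 2), a
   solution of p^2 + q^2 + r^2 - p q r = 4 with p, q, r >= 2.  Mutating such a
   cyclic triangle at a vertex reverses all arrows and replaces one weight by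
   its Vieta partner with respect to this equation, so the solution set is
   stable under mutation and every mutation stays cyclic.
   For [a <> b], mutating at an endpoint of the arrow of weight 2 turns (u, v)
   into (2v - u, v) or (u, 2u - v): a subtractive Euclidean algorithm which
   preserves |u - v| <> 0 and decreases u + v, so it ends with a non-positive
   weight, i.e. with an acyclic quiver. *)

Lemma sgz_mul_pos_part (x y : int) :
  sgz x * Num.max (x * y) 0 = sgz y * Num.max (x * y) 0.
Proof.
have [xy_gt0 | xy_le0] := ltP 0 (x * y); last by rewrite !mulr0.
by move: xy_gt0; rewrite -sgz_gt0 sgzM; case: sgzP; case: sgzP.
Qed.

Section Mutation.

Variable n : nat.
Implicit Types (B : 'M[int]_n) (ks : seq 'I_n).

Lemma mutateN k B : mutate k (- B) = - mutate k B.
Proof.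
apply/matrixP => i j; rewrite !mxE; case: ifP => _; rewrite ?mxE //.
by rewrite sgzN mulrNN mulNr opprD.
Qed.

Lemma mutate_seqN ks B : mutate_seq ks (- B) = - mutate_seq ks B.
Proof. by elim: ks B => //= k ks IHks B; rewrite mutateN IHks. Qed.

Lemma mutate_skew k B : skew_symmetric B -> skew_symmetric (mutate k B).
Proof.
move=> skB i j; rewrite !mxE orbC; case: ifP => _; first by rewrite skB.
rewrite [B i j]skB [B i k]skB [B k j]skB mulrNN sgzN mulNr opprD.
by rewrite sgz_mul_pos_part [B j k * _]mulrC.
Qed.

Lemma mutate_seq_skew ks B : skew_symmetric B -> skew_symmetric (mutate_seq ks B).
Proof. by elim: ks B => //= k ks IHks B skB; apply/IHks/mutate_skew. Qed.

Definition has_potential B := exists f : 'I_n -> int, forall i j, 0 < B i j -> f i < f j.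

Lemma potential_acyclic B : has_potential B -> ~ is_cyclic B.
Proof.
move=> [f incr] [[|x s] []] // _ /= /(sub_path (e' := relpre f <%R) incr).
have x_in : x \in rcons s x by rewrite mem_rcons mem_head.
by rewrite -path_map => /lt_path_min/allP/(_ _ (map_f f x_in)); rewrite ltxx.
Qed.

Lemma potentialN B : skew_symmetric B -> has_potential B -> has_potential (- B).
Proof.
move=> skB [f incr]; exists (fun i => - f i) => i j.
by rewrite mxE skB opprK ltrN2 => /incr.
Qed.

End Mutation.

Lemma mutate_potential_step n k (B B' : 'M[int]_n) :
  mutate k B = - B' -> skew_symmetric B' ->
  (exists ks, has_potential (mutate_seq ks B')) ->
  exists ks, has_potential (mutate_seq ks B).
Proof.
move=> mutB skB' [ks pot]; exists (k :: ks).
by rewrite /= mutB mutate_seqN; apply/potentialN/pot/mutate_seq_skew.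
Qed.

(* The triangle 0 -> 1 -> 2 -> 0 with arrow weights p, q, r. *)
Definition skew3 (p q r : int) : 'M[int]_3 :=
  \matrix_(i < 3, j < 3)
    nth 0 (nth [::] [:: [:: 0; p; -r]; [:: -p; 0; q]; [:: r; -q; 0]] i) j.

Definition k0 : 'I_3 := @Ordinal 3 0 isT.
Definition k1 : 'I_3 := @Ordinal 3 1 isT.
Definition k2 : 'I_3 := @Ordinal 3 2 isT.

Lemma ord3P (k : 'I_3) : [\/ k = k0, k = k1 | k = k2].
Proof.
by case: k => [[|[|[|//]]] ?]; [constructor 1 | constructor 2 | constructor 3]; apply: val_inj.
Qed.

Ltac case_ord3 i := let lt_i3 := fresh in case: i => [[|[|[|?]]] lt_i3] //.

Lemma Amat_skew3 a b : Amat a b = skew3 a b 2.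
Proof. by apply/matrixP => i j; rewrite !mxE; case_ord3 i; case_ord3 j. Qed.

Lemma skew3N p q r : skew3 (- p) (- q) (- r) = - skew3 p q r.
Proof. by apply/matrixP => i j; rewrite !mxE; case_ord3 i; case_ord3 j => /=; lia. Qed.

Lemma skew3_skew p q r : skew_symmetric (skew3 p q r).
Proof. by move=> i j; rewrite !mxE; case_ord3 i; case_ord3 j => /=; lia. Qed.

Lemma mutate_skew3_0 p q r :
  0 < p -> 0 < r -> mutate k0 (skew3 p q r) = - skew3 p (p * r - q) r.
Proof.
move=> *; apply/matrixP => i j; rewrite !mxE.
by case_ord3 i; case_ord3 j => /=; rewrite ?mxE /=; nia.
Qed.

Lemma mutate_skew3_1 p q r :
  0 < p -> 0 < q -> mutate k1 (skew3 p q r) = - skew3 p q (p * q - r).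
Proof.
move=> *; apply/matrixP => i j; rewrite !mxE.
by case_ord3 i; case_ord3 j => /=; rewrite ?mxE /=; nia.
Qed.

Lemma mutate_skew3_2 p q r :
  0 < q -> 0 < r -> mutate k2 (skew3 p q r) = - skew3 (q * r - p) q r.
Proof.
move=> *; apply/matrixP => i j; rewrite !mxE.
by case_ord3 i; case_ord3 j => /=; rewrite ?mxE /=; nia.
Qed.

Lemma skew3_cyclic p q r : 0 < p -> 0 < q -> 0 < r -> is_cyclic (skew3 p q r).
Proof.
move=> *; exists [:: k0; k1; k2]; split => //=.
by rewrite /quiver_arrow !mxE /=; apply/and4P; split => //; lia.
Qed.

Lemma skew3N_cyclic p q r : 0 < p -> 0 < q -> 0 < r -> is_cyclic (- skew3 p q r).
Proof.
move=> *; exists [:: k0; k2; k1]; split => //=.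
by rewrite /quiver_arrow !mxE /=; apply/and4P; split => //; lia.
Qed.

Lemma skew3_potential p q r : p * q <= 0 -> 0 < r -> has_potential (skew3 p q r).
Proof.
move=> pq_le0 r_gt0.
have [[p_ge0 q_le0] | [p_le0 q_ge0]] : (0 <= p /\ q <= 0) \/ (p <= 0 /\ 0 <= q) by nia.
- exists (fun i : 'I_3 => nth 0 [:: 1; 2; 0] i) => i j.
  by rewrite mxE; case_ord3 i; case_ord3 j => /=; lia.
- exists (fun i : 'I_3 => nth 0 [:: 2; 0; 1] i) => i j.
  by rewrite mxE; case_ord3 i; case_ord3 j => /=; lia.
Qed.

Definition markov_triple (p q r : int) :=
  [/\ 2 <= p, 2 <= q, 2 <= r & p ^+ 2 + q ^+ 2 + r ^+ 2 - p * q * r = 4].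

Lemma markov_triple_swap12 p q r : markov_triple p q r -> markov_triple q p r.
Proof. by case=> *; split => //; lia. Qed.

Lemma markov_triple_swap23 p q r : markov_triple p q r -> markov_triple p r q.
Proof. by case=> *; split => //; lia. Qed.

(* [p] and [q r - p] are the two roots of [X^2 - q r X + q^2 + r^2 - 4]; their
   product [q^2 + r^2 - 4] is positive, and the other root cannot be 1 since
   [q^2 + r^2 - q r >= q r > 3]. *)
Lemma markov_triple_flip p q r : markov_triple p q r -> markov_triple (q * r - p) q r.
Proof.
rewrite /markov_triple !expr2; case=> p_ge2 q_ge2 r_ge2 eq4; split => //; last by nia.
have vieta : p * (q * r - p) = q * q + r * r - 4 by lia.
have : q * r - p != 1 by apply/eqP => flip1; rewrite flip1 in vieta; nia.
by nia.
Qed.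

Lemma mutate_markov k p q r : markov_triple p q r ->
  exists p' q' r', markov_triple p' q' r' /\ mutate k (skew3 p q r) = - skew3 p' q' r'.
Proof.
move=> mpqr; have [p_ge2 q_ge2 r_ge2 _] := mpqr.
case: (ord3P k) => ->.
- exists p, (p * r - q), r; split; last by apply: mutate_skew3_0; lia.
  exact/markov_triple_swap12/markov_triple_flip/markov_triple_swap12.
- exists p, q, (p * q - r); split; last by apply: mutate_skew3_1; lia.
  apply/markov_triple_swap23/markov_triple_swap12/markov_triple_flip.
  exact/markov_triple_swap12/markov_triple_swap23.
- exists (q * r - p), q, r; split; last by apply: mutate_skew3_2; lia.
  exact: markov_triple_flip.
Qed.

Definition markov_quiver (B : 'M[int]_3) :=
  exists p q r, markov_triple p q r /\ (B = skew3 p q r \/ B = - skew3 p q r).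

Lemma markov_quiver_mutate k B : markov_quiver B -> markov_quiver (mutate k B).
Proof.
move=> [p [q [r [mpqr mB]]]].
have [p' [q' [r' [mpqr' mutE]]]] := mutate_markov k mpqr.
exists p', q', r'; split => //; case: mB => ->; rewrite ?mutateN mutE; last rewrite opprK.
- by right.
- by left.
Qed.

Lemma markov_quiver_mutation_cyclic B : markov_quiver B -> mutation_cyclic B.
Proof.
move=> mB ks; have : markov_quiver (mutate_seq ks B).
  by elim: ks B mB => //= k ks IHks B mB; apply/IHks/markov_quiver_mutate.
move=> [p [q [r [[p_ge2 q_ge2 r_ge2 _] [-> | ->]]]]].
- by apply: skew3_cyclic; lia.
- by apply: skew3N_cyclic; lia.
Qed.

Lemma skew3_descent (u v : int) : 0 < u -> 0 < v -> u != v ->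
  exists ks, has_potential (mutate_seq ks (skew3 u v 2)).
Proof.
have [N] := ubnP (absz (u + v)); elim: N u v => // N IHN u v lt_uv_N u_gt0 v_gt0 neq_uv.
have [lt_vu | le_uv] := ltP v u.
- apply: (mutate_potential_step (@mutate_skew3_2 u v 2 v_gt0 isT)) (skew3_skew _ _ _) _.
  have [le0 | gt0] := leP (v * 2 - u) 0.
    by exists [::]; apply: skew3_potential; nia.
  by apply: IHN; lia.
- apply: (mutate_potential_step (@mutate_skew3_0 u v 2 u_gt0 isT)) (skew3_skew _ _ _) _.
  have [le0 | gt0] := leP (u * 2 - v) 0.
    by exists [::]; apply: skew3_potential; nia.
  by apply: IHN; lia.
Qed.

Theorem mainTheorem14 (a b : int) (hab : b <= a) (hb : 2 <= b) :
  mutation_cyclic (Amat a b) <-> a = b.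
Proof.
rewrite Amat_skew3; split => [cycA | <-].
-
  apply/eqP; apply: contraT => neq_ab.
  have [ks pot] := (@skew3_descent a b) ltac:(lia) ltac:(lia) neq_ab.
  by have [] := potential_acyclic pot (cycA ks).
- apply: markov_quiver_mutation_cyclic; exists a, a, 2; split; last by left.
  by split; rewrite ?expr2; lia.
Qed.
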